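(* The algebras $\mathcal{A}$ and $T$ coincide. In particular, $\{M^{t,p}_{i,j}\mid (i,j,t,p)\in\mathcal{I}_m\}$ is a basis of $T$, and $T$ equals the centralizer algebra of the stabilizer $\mathrm{Aut}_{x_0}(O_{m+1})$, i.e. the algebra of complex $X\times X$ matrices invariant under simultaneously permuting rows and columns by elements of $\mathrm{Aut}_{x_0}(O_{m+1})$.
   Context: Let $m$ be a positive integer, $S=\{1,\ldots,2m+1\}$, $X$ the set of $m$-subsets of $S$, and $O_{m+1}$ the Odd graph on $X$ (adjacency = disjointness), with distance function $\partial$ and diameter $m$. Let $x_0=\{1,\ldots,m\}$ and $\mathrm{Aut}_{x_0}(O_{m+1})$ the stabilizer of $x_0$ in the automorphism group. $A_1$ is the adjacency matrix; $E^*_i$ ($0\leq i\leq m$) is the diagonal $X\times X$ matrix with $(y,y)$-entry $1$ if $\partial(x_0,y)=i$, else $0$. The Terwilliger algebra $T$ is the subalgebra of complex $X\times X$ matrices generated by $A_1,E^*_0,\ldots,E^*_m$. For $(x,y,z)\in X^3$ let $\partial(x,y,z):=(|x\cap y|,|x\cap z|,|y\cap z|,|x\cap y\cap z|)$, and $\mathcal{I}_m$ the set of four-tuples realized as some $\partial(x,y,z)$. For $(i,j,t,p)\in\mathcal{I}_m$, $M^{t,p}_{i,j}$ is the $0/1$ matrix with $(x,y)$-entry $1$ iff $\partial(x_0,x,y)=(i,j,t,p)$. $\mathcal{A}$ is the complex linear span of $\{M^{t,p}_{i,j}:(i,j,t,p)\in\mathcal{I}_m\}$. *)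

From HB Require Import structures.
From mathcomp Require Import all_boot all_order all_algebra.
From mathcomp Require Import fingroup perm complex Rstruct.

Set Implicit Arguments.
Unset Strict Implicit.
Unset Printing Implicit Defensive.

Import Order.TTheory GRing.Theory Num.Theory.
Local Open Scope ring_scope.

Definition Cplx : Type := (complex Rdefinitions.R).

Definition Sset (m : nat) := 'I_(m.*2.+1).
Definition X (m : nat) : finType := {A : {set Sset m} | #|A| == m}.
Definition x0set (m : nat) : {set Sset m} := [set i : Sset m | (nat_of_ord i < m)%N].

Lemma card_x0set (m : nat) : #|x0set m| == m.
Proof.
have le : (m <= m.*2.+1)%N by rewrite -addnn ltnW // ltnS leq_addr.
have -> : x0set m = [set widen_ord le i | i in 'I_m].
  apply/setP => j; rewrite !inE; apply/idP/imsetP => [jm|[i _ ->]]; last by rewrite /= ltn_ord.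
  by exists (Ordinal jm) => //; apply/val_inj.
by rewrite card_imset ?card_ord // => a b /(congr1 val) ab; exact: val_inj.
Qed.

Definition x0 (m : nat) : X m := exist _ (x0set m) (card_x0set m).

(* Adjacency in the Odd graph O_{m+1}: disjointness. *)
Definition adj (m : nat) (x y : X m) : bool := [disjoint val x & val y].

Fixpoint walk (m : nat) (k : nat) (x y : X m) : bool :=
  if k is k'.+1 then [exists z : X m, adj x z && walk k' z y] else x == y.

Definition dist_is (m : nat) (x y : X m) (i : nat) : bool :=
  walk i x y && [forall j : 'I_i, ~~ walk j x y].

Definition Mat (m : nat) := 'M[Cplx]_(#|X m|).
Definition ent (m : nat) (B : Mat m) (x y : X m) : Cplx :=
  B (enum_rank x) (enum_rank y).
Definition mkMat (m : nat) (f : X m -> X m -> Cplx) : Mat m :=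
  \matrix_(i, j) f (enum_val i) (enum_val j).

Definition A1 (m : nat) : Mat m := mkMat (fun x y => (adj x y)%:R).

Definition Estar (m : nat) (i : nat) : Mat m :=
  mkMat (fun x y => ((x == y) && dist_is (x0 m) y i)%:R).

Inductive inT (m : nat) : Mat m -> Prop :=
  | inT_A1 : inT (A1 m)
  | inT_Estar (i : nat) : (i <= m)%N -> inT (Estar m i)
  | inT_add (B C : Mat m) : inT B -> inT C -> inT (B + C)
  | inT_scale (c : Cplx) (B : Mat m) : inT B -> inT (c *: B)
  | inT_mul (B C : Mat m) : inT B -> inT C -> inT (B *m C).

(* Four-tuples (i,j,t,p); all entries are at most m, so we index by 'I_(m+1). *)
Definition tup (m : nat) := ('I_m.+1 * 'I_m.+1 * 'I_m.+1 * 'I_m.+1)%type.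

Definition dtriple (m : nat) (x y z : X m) : nat * nat * nat * nat :=
  (#|val x :&: val y|, #|val x :&: val z|, #|val y :&: val z|,
   #|val x :&: val y :&: val z|)%N.

Definition tup_nat (m : nat) (τ : tup m) : nat * nat * nat * nat :=
  let: (i, j, t, p) := τ in (i : nat, j : nat, t : nat, p : nat).

Definition inI (m : nat) (τ : tup m) : bool :=
  [exists x : X m, exists y : X m, exists z : X m, dtriple x y z == tup_nat τ].

Definition Mtp (m : nat) (τ : tup m) : Mat m :=
  mkMat (fun x y => (dtriple (x0 m) x y == tup_nat τ)%:R).

Definition inA (m : nat) (B : Mat m) : Prop :=
  exists c : tup m -> Cplx, B = \sum_(τ : tup m | inI τ) c τ *: Mtp τ.

Definition is_aut (m : nat) (s : {perm X m}) : bool :=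
  [forall x : X m, forall y : X m, adj (s x) (s y) == adj x y].

Definition in_stab (m : nat) (s : {perm X m}) : bool := is_aut s && (s (x0 m) == x0 m).

Definition in_centralizer (m : nat) (B : Mat m) : Prop :=
  forall s : {perm X m}, in_stab s -> forall x y : X m, ent B (s x) (s y) = ent B x y.

(* Every generator of T is fixed by the stabilizer of x0, so T lies in the centralizer
   algebra.  The stabilizer contains every permutation of S that fixes x0 setwise, and two
   pairs (x, y), (x', y') with ∂(x0, x, y) = ∂(x0, x', y') cut S into Venn regions (with
   x0) of the same sizes, so such a permutation carries one pair to the other: the
   centralizer algebra is spanned by the matrices M^{t,p}_{i,j}, whose supports are
   disjoint and nonempty.
   Conversely, the distance from x0 to y is min(2(m - s), 2s + 1) with s = |x0 ∩ y|, an
   injective function of s, so each E*_d projects onto a level {y : |x0 ∩ y| = l}; and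
   A E*_k A E*_j relates z to the vertices y of level j obtained from z by exchanging at
   most one point, on the side of x0 dictated by k.  Composing m - t such steps towards x
   gives a nonnegative matrix of T supported on the pairs with |x0 ∩ x ∩ y| >= p and
   |(x ∩ y) \ x0| >= t - p, and positive where both are equalities.  Hence M^{t,p}_{i,j}
   lies in T modulo the M^{t',p'}_{i,j} with t' > t, and downward induction on t concludes. *)

From HB Require Import structures.
From mathcomp Require Import all_boot all_order all_algebra.
From mathcomp Require Import fingroup perm complex Rstruct.
From mathcomp Require Import zify.
Import GRing.Theory Num.Theory.

Set Implicit Arguments.
Unset Strict Implicit.
Unset Printing Implicit Defensive.

Lemma perm_of_card_fibres (T : finType) (K : eqType) (f g : T -> K) :
  (forall k, #|[set t | f t == k]| = #|[set t | g t == k]|) ->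
  exists s : {perm T}, forall t, g (s t) = f t.
Proof.
move=> card_fib.
pose F t := enum [set u | f u == f t].
pose G t := enum [set u | g u == f t].
pose h t := nth t (G t) (index t (F t)).
have size_FG t : size (F t) = size (G t) by rewrite /F /G -!cardE card_fib.
have mem_F t : t \in F t by rewrite /F mem_enum inE.
have index_F t : index t (F t) < size (G t) by rewrite -size_FG index_mem.
have gh t : g (h t) = f t.
  by have := mem_nth t (index_F t); rewrite /G mem_enum inE => /eqP.
have h_inj : injective h.
  move=> t1 t2 e; have ef : f t1 = f t2 by rewrite -!gh e.
  have eF : F t1 = F t2 by rewrite /F ef.
  have eG : G t1 = G t2 by rewrite /G ef.
  move: e; rewrite /h [nth t1 _ _](set_nth_default t2) ?index_F // eG eF.
  have i1 : index t1 (F t2) < size (G t2) by rewrite -eF -eG index_F.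
  move/eqP; rewrite nth_uniq ?enum_uniq ?i1 ?index_F // => /eqP ei.
  by rewrite -(nth_index t1 (mem_F t1)) -(nth_index t1 (mem_F t2)) eF ei.
by exists (perm h_inj) => t; rewrite permE gh.
Qed.

Definition venn_count (T : finType) (a b c : {set T}) (k : bool * bool * bool) :=
  #|[set t | (t \in a, t \in b, t \in c) == k]|.

Lemma card_indicator (T : finType) (A : {set T}) : #|A| = \sum_t (t \in A : nat).
Proof. by rewrite -sum1_card big_mkcond /=; apply: eq_bigr => t _; case: (t \in A). Qed.

Lemma venn_countE (T : finType) (a b c : {set T}) :
  let N b1 b2 b3 := venn_count a b c (b1, b2, b3) in
  #|a| = N true true true + N true true false + N true false true + N true false false /\
  #|b| = N true true true + N true true false + N false true true + N false true false /\
  #|c| = N true true true + N true false true + N false true true + N false false true /\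
  #|a :&: b| = N true true true + N true true false /\
  #|a :&: c| = N true true true + N true false true /\
  #|b :&: c| = N true true true + N false true true /\
  #|a :&: b :&: c| = N true true true /\
  #|T| = N true true true + N true true false + N true false true + N true false false
           + N false true true + N false true false + N false false true + N false false false.
Proof.
rewrite /venn_count !card_indicator -sum1_card -!big_split /=.
by do !split; apply: eq_bigr => t _; rewrite !inE; case: (t \in a); case: (t \in b); case: (t \in c).
Qed.

Lemma venn3_perm (T : finType) (a b c a' b' c' : {set T}) :
  #|a| = #|a'| -> #|b| = #|b'| -> #|c| = #|c'| ->
  #|a :&: b| = #|a' :&: b'| -> #|a :&: c| = #|a' :&: c'| -> #|b :&: c| = #|b' :&: c'| ->
  #|a :&: b :&: c| = #|a' :&: b' :&: c'| ->
  exists s : {perm T}, forall t,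
    [/\ (s t \in a') = (t \in a), (s t \in b') = (t \in b) & (s t \in c') = (t \in c)].
Proof.
move=> h1 h2 h3 h4 h5 h6 h7.
have [e1 [e2 [e3 [e4 [e5 [e6 [e7 e8]]]]]]] := venn_countE a b c.
have [f1 [f2 [f3 [f4 [f5 [f6 [f7 f8]]]]]]] := venn_countE a' b' c'.
have /perm_of_card_fibres [s hs] : forall k,
    venn_count a b c k = #|[set t | (t \in a', t \in b', t \in c') == k]|.
  by case=> [[[] []] []]; rewrite -/(venn_count a' b' c' _); lia.
by exists s => t; case: (hs t).
Qed.

Section OddGraph.

Variable m : nat.
Implicit Types x y z : X m.

Lemma card_vertex x : #|val x| = m.
Proof. exact: eqP (valP x). Qed.

Lemma card_setC_vertex x : #|~: val x| = m.+1.
Proof. by have := cardsC (val x); rewrite card_vertex card_ord; lia. Qed.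

Lemma card_x0 : #|x0set m| = m.
Proof. exact: eqP (card_x0set m). Qed.

Lemma card_setC_x0 : #|~: x0set m| = m.+1.
Proof. by have := cardsC (x0set m); rewrite card_x0 card_ord; lia. Qed.

Definition vertex (A : {set Sset m}) (cardA : #|A| = m) : X m :=
  exist _ A (introT eqP cardA).

Lemma card_meet_le x y : #|val x :&: val y| <= m.
Proof. by apply: leq_trans (subset_leq_card (subsetIl _ _)) _; rewrite card_vertex. Qed.

Lemma vertex_eq x y : m <= #|val x :&: val y| -> x = y.
Proof.
move=> le_m; have meet_x : val x :&: val y = val x.
  by apply/eqP; rewrite eqEcard subsetIl card_vertex.
apply/val_inj/eqP; rewrite eqEcard !card_vertex leqnn andbT.
by apply: subset_trans (subsetIr (val x) _); rewrite meet_x.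
Qed.

Lemma adjE x y : adj x y = (val y \subset ~: val x).
Proof. by rewrite /adj disjoint_sym disjoints_subset. Qed.

Lemma card_setCI x y : #|~: val x :&: val y| = m - #|val x :&: val y|.
Proof. by rewrite setIC -setDE cardsD card_vertex setIC. Qed.

(* A neighbour z of x is ~x minus one point, so |z :&: y| is |~x :&: y| or one less. *)
Lemma card_meet_adj x y z : adj x z ->
  (#|val z :&: val y| == m - #|val x :&: val y|) ||
  (#|val z :&: val y|.+1 == m - #|val x :&: val y|).
Proof.
rewrite adjE => sub_z.
have meet_z : ~: val x :&: val y :&: val z = val z :&: val y.
  by rewrite setIC setIA (setIidPl sub_z).
have := cardsID (val z) (~: val x :&: val y); rewrite meet_z card_setCI.
have : #|~: val x :&: val y :\: val z| <= 1.
  apply: leq_trans (_ : #|~: val x :\: val z| <= 1).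
    by apply/subset_leq_card/setSD/subsetIl.
  by rewrite cardsDS // card_setC_vertex card_vertex subSnn.
have := card_meet_le x y; lia.
Qed.

Lemma exists_adj_meet x y (b : bool) : (b ==> (#|val x :&: val y| < m)) ->
  exists2 z, adj x z & #|val z :&: val y| + b = m - #|val x :&: val y|.
Proof.
move=> hb.
have [u uD] : exists u, u \in if b then ~: val x :&: val y else ~: val x :\: val y.
  apply/set0Pn; rewrite -card_gt0; move: hb; case: b; rewrite ?implyTb => hb.
    by rewrite card_setCI; lia.
  by rewrite cardsD card_setC_vertex card_setCI; have := card_meet_le x y; lia.
have ux : u \in ~: val x by move: uD; case: (b); rewrite !inE => /andP[].
have card_z : #|~: val x :\ u| = m by have := cardsD1 u (~: val x); rewrite ux card_setC_vertex; lia.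
exists (vertex card_z); first by rewrite adjE subD1set.
have -> : (~: val x :\ u) :&: val y = (~: val x :&: val y) :\ u by rewrite setIDAC.
have := cardsD1 u (~: val x :&: val y); rewrite card_setCI /= !inE.
by move: uD; case: (b); rewrite !inE; case: (u \in sval y); case: (u \in sval x) => //=; lia.
Qed.

Definition walkable (k s : nat) : bool := if odd k then s <= k./2 else m <= s + k./2.

Lemma walkE k x y : walk k x y = walkable k #|val x :&: val y|.
Proof.
elim: k x => [|k IH] x /=.
  rewrite /walkable /= addn0; apply/eqP/idP => [->|]; last exact: vertex_eq.
  by rewrite setIid card_vertex.
have walkableS s : walkable k.+1 s = if odd k then m <= s + k./2.+1 else s <= k./2.
  by rewrite /walkable /= uphalf_half; have := odd_double_half k; case: (odd k) => /=; lia.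
have s_le := card_meet_le x y; set s := #|_ :&: _| in s_le *.
apply/existsP/idP => [[z /andP[xz]]|wk].
  rewrite IH walkableS /walkable; move: (card_meet_adj y xz).
  by rewrite -/s; case: (odd k) => /=; lia.
have [b b_lt wb] : exists2 b : bool, b ==> (s < m) & walkable k (m - s - b).
  case: (boolP (walkable k (m - s))) => [|not_wk]; first by exists false; rewrite ?subn0.
  by exists true; move: wk not_wk; rewrite walkableS /walkable; case: (odd k) => /=; lia.
have [z xz meet_z] := exists_adj_meet b_lt.
by exists z; rewrite xz IH; move: wb; rewrite /s -meet_z addnK.
Qed.

Definition dist_of_meet (s : nat) : nat := minn (m - s).*2 s.*2.+1.

Lemma walkable_dist_of_meet s : s <= m -> walkable (dist_of_meet s) s.
Proof.
rewrite /walkable /dist_of_meet /minn; case: ltnP => /= [lt|ge] s_le.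
  by rewrite odd_double doubleK subnKC.
by rewrite odd_double /= uphalf_double.
Qed.

Lemma dist_of_meet_min j s : walkable j s -> dist_of_meet s <= j.
Proof.
rewrite /walkable /dist_of_meet geq_min; have := odd_double_half j.
by case: (odd j) => /= half_j w; apply/orP; [right | left]; lia.
Qed.

Lemma dist_isE x y d : dist_is x y d = (d == dist_of_meet #|val x :&: val y|).
Proof.
have s_le := card_meet_le x y; rewrite /dist_is walkE.
apply/andP/eqP => [[wd /forallP no_shorter]|->].
  apply/eqP; rewrite eqn_leq dist_of_meet_min // andbT leqNgt; apply/negP => lt.
  by have := no_shorter (Ordinal lt); rewrite walkE walkable_dist_of_meet.
split; first exact: walkable_dist_of_meet.
by apply/forallP => j; rewrite walkE; apply/negP => /dist_of_meet_min; rewrite leqNgt ltn_ord.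
Qed.

Lemma dist_of_meet_inj s l : s <= m -> l <= m -> (dist_of_meet s == dist_of_meet l) = (s == l).
Proof.
move=> s_le l_le; apply/eqP/eqP => [|-> //]; rewrite /dist_of_meet /minn.
by case: ltnP => /= ?; case: ltnP => /= ?; lia.
Qed.

Lemma dist_of_meet_le s : s <= m -> dist_of_meet s <= m.
Proof. by rewrite /dist_of_meet /minn; case: ltnP => /=; lia. Qed.

End OddGraph.

Section TerwilligerAlgebra.

Variable m : nat.
Implicit Types (B C : Mat m) (x y z : X m).

Lemma ent_mkMat (f : X m -> X m -> Cplx) x y : ent (mkMat f) x y = f x y.
Proof. by rewrite /ent mxE !enum_rankK. Qed.

Lemma entD B C x y : ent (B + C)%R x y = (ent B x y + ent C x y)%R.
Proof. by rewrite /ent mxE. Qed.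

Lemma entZ (c : Cplx) B x y : ent (c *: B)%R x y = (c * ent B x y)%R.
Proof. by rewrite /ent mxE. Qed.

Lemma ent_sum (I : finType) (P : pred I) (F : I -> Mat m) x y :
  ent (\sum_(i | P i) F i)%R x y = (\sum_(i | P i) ent (F i) x y)%R.
Proof. by rewrite /ent summxE. Qed.

Lemma entM B C x y : ent (B *m C)%R x y = (\sum_z ent B x z * ent C z y)%R.
Proof.
rewrite /ent mxE (reindex (@enum_rank (X m))) /=; last first.
  by exists enum_val => i _; rewrite (enum_valK, enum_rankK).
by apply: eq_bigr => z _.
Qed.

Lemma ent_inj B C : (forall x y, ent B x y = ent C x y) -> B = C.
Proof.
by move=> eqBC; apply/matrixP => i j; have := eqBC (enum_val i) (enum_val j); rewrite /ent !enum_valK.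
Qed.

Lemma inT0 : inT (0 : Mat m)%R.
Proof. by rewrite -(scale0r (A1 m)); apply/inT_scale/inT_A1. Qed.

Lemma inT_sub B C : inT B -> inT C -> inT (B - C)%R.
Proof. by move=> TB TC; rewrite -scaleN1r; apply/inT_add/inT_scale. Qed.

Lemma inT_sum (I : finType) (P : pred I) (F : I -> Mat m) :
  (forall i, P i -> inT (F i)) -> inT (\sum_(i | P i) F i)%R.
Proof. by move=> TF; apply: big_ind => //; [exact: inT0 | exact: inT_add]. Qed.

Definition nat_mx (F : X m -> X m -> nat) : Mat m := mkMat (fun x y => (F x y)%:R%R).

Lemma ent_nat_mx F x y : ent (nat_mx F) x y = (F x y)%:R%R.
Proof. exact: ent_mkMat. Qed.

Definition nat_mul (F G : X m -> X m -> nat) x y : nat := \sum_z F x z * G z y.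

Lemma nat_mx_mul F G : (nat_mx F *m nat_mx G)%R = nat_mx (nat_mul F G).
Proof.
apply: ent_inj => x y; rewrite entM !ent_nat_mx natr_sum.
by apply: eq_bigr => z _; rewrite !ent_nat_mx natrM.
Qed.

Lemma inT_nat_mul F G : inT (nat_mx F) -> inT (nat_mx G) -> inT (nat_mx (nat_mul F G)).
Proof. by rewrite -nat_mx_mul; apply: inT_mul. Qed.

Lemma nat_mul_gt0 F G x y :
  (0 < nat_mul F G x y) = [exists z, (0 < F x z) && (0 < G z y)].
Proof.
rewrite lt0n sum_nat_eq0 negb_forall; apply: eq_existsb => z.
by rewrite muln_eq0 negb_or -!lt0n.
Qed.

Lemma nat_mx0 : nat_mx (fun _ _ => 0) = 0%R.
Proof. by apply/matrixP => i j; rewrite !mxE. Qed.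

Definition level y := #|x0set m :&: val y|.

Definition on_level (l : nat) x y : nat := (x == y) && (level y == l).

Lemma level_le y : level y <= m.
Proof. by apply: leq_trans (subset_leq_card (subsetIl _ _)) _; rewrite card_x0. Qed.

Lemma Estar_dist_of_meet l : l <= m -> Estar m (dist_of_meet m l) = nat_mx (on_level l).
Proof.
move=> l_le; apply/matrixP => i j; rewrite !mxE /on_level dist_isE.
by case: (_ == _) => //=; rewrite (dist_of_meet_inj l_le (level_le _)) eq_sym.
Qed.

Lemma inT_on_level l : inT (nat_mx (on_level l)).
Proof.
have [l_le|l_gt] := leqP l m.
  by rewrite -Estar_dist_of_meet //; apply/inT_Estar/dist_of_meet_le.
suff -> : nat_mx (on_level l) = 0%R by exact: inT0.
rewrite -nat_mx0; apply/matrixP => i j; rewrite !mxE /on_level.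
suff /negbTE -> : level (enum_val j) != l by rewrite andbF.
by apply: contraTneq l_gt => <-; rewrite -leqNgt level_le.
Qed.

Lemma inT_adj : inT (nat_mx (fun x y => adj x y)).
Proof. exact: inT_A1. Qed.

End TerwilligerAlgebra.

Ltac by_membership :=
  apply/setP => ?; rewrite !inE; do ![case: (_ \in _)]; done.

Lemma card_setI_setU1 (T : finType) (R A : {set T}) b : b \notin A ->
  #|R :&: (b |: A)| = (b \in R) + #|R :&: A|.
Proof.
move=> bA; rewrite setIUr; case: (boolP (b \in R)) => bR.
  by rewrite (setIidPr _) ?sub1set // cardsU1 inE (negbTE bA) andbF.
suff -> : R :&: [set b] = set0 by rewrite set0U.
by apply/eqP; rewrite setI_eq0 disjoint_sym disjoints1.
Qed.

Lemma card_setI_swap (T : finType) (R A : {set T}) a b : a \in A -> b \notin A ->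
  #|R :&: (b |: (A :\ a))| + (a \in R) = #|R :&: A| + (b \in R).
Proof.
move=> aA bA; rewrite card_setI_setU1 ?inE ?(negbTE bA) ?andbF //.
by rewrite -{2}(setD1K aA) card_setI_setU1 ?setD11; lia.
Qed.

Section Cones.

Variable m : nat.
Implicit Types (x y z w : X m) (R : {set Sset m}).

Definition meet_in R x y := #|R :&: val x :&: val y|.

Definition two_step (k j : nat) : X m -> X m -> nat :=
  nat_mul (nat_mul (nat_mul (fun x y => adj x y) (on_level k)) (fun x y => adj x y)) (on_level j).

Lemma inT_two_step k j : inT (nat_mx (two_step k j)).
Proof. by do !apply: inT_nat_mul; (exact: inT_adj || exact: inT_on_level). Qed.

Lemma two_step_gt0 k j z y :
  (0 < two_step k j z y) = (level y == j) && [exists w, [&& adj z w, level w == k & adj w y]].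
Proof.
apply/idP/andP => [|[lev_y /existsP[w /and3P[zw lev_w wy]]]].
  rewrite nat_mul_gt0 => /existsP[v /andP[step]]; rewrite lt0b => /andP[/eqP vy ->].
  move: step; rewrite vy nat_mul_gt0 => /existsP[u /andP[+ uy]]; rewrite lt0b in uy.
  rewrite nat_mul_gt0 => /existsP[w /andP[]]; rewrite !lt0b => zw /andP[/eqP wu lev_w].
  by split=> //; apply/existsP; exists w; rewrite zw wu lev_w.
rewrite /two_step nat_mul_gt0; apply/existsP; exists y; rewrite lt0b /on_level eqxx lev_y !andbT.
rewrite nat_mul_gt0; apply/existsP; exists w; rewrite lt0b wy andbT.
by rewrite nat_mul_gt0; apply/existsP; exists w; rewrite !lt0b zw eqxx lev_w.
Qed.

Lemma level_vertex (A : {set Sset m}) (cardA : #|A| = m) : level (vertex cardA) = #|x0set m :&: A|.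
Proof. by []. Qed.

Lemma exists_swap_step x y a b :
  a \in val y -> a \notin val x -> b \in val x -> b \notin val y ->
  exists z w, [/\ adj z w, adj w y, level w + (level y + (b \in x0set m)) = m,
    level z + (a \in x0set m) = level y + (b \in x0set m) &
    forall R, meet_in R x z = meet_in R x y + (b \in R)].
Proof.
move=> ay ax bx by_.
have card_z : #|b |: (val y :\ a)| = m.
  have := cardsD1 a (val y); rewrite cardsU1 !inE (negbTE by_) andbF ay card_vertex /=.
  lia.
have card_w : #|~: (b |: val y)| = m.
  by have := cardsC (b |: val y); rewrite cardsU1 by_ card_vertex card_ord; lia.
exists (vertex card_z), (vertex card_w); split.
- by rewrite adjE /= setCS setUS // subD1set.
- by rewrite adjE /= setCK subsetUr.
- have := subset_leq_card (subsetIl (x0set m) (b |: val y)).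
  by rewrite level_vertex -setDE cardsD card_x0 !card_setI_setU1 // /level; lia.
- by rewrite level_vertex card_setI_swap.
move=> R; have meet_xz : val x :&: (b |: (val y :\ a)) = b |: (val x :&: val y).
  apply/setP => u; rewrite !inE; case: (eqVneq u b) => [->|_]; first by rewrite bx.
  by case: (eqVneq u a) => [->|_]; rewrite ?(negbTE ax) ?andbF.
rewrite /meet_in -!setIA /= meet_xz card_setI_setU1 ?inE ?(negbTE by_) ?andbF //.
exact: addnC.
Qed.

Lemma card_two_step_region R z w y : adj z w -> adj w y ->
  #|R :&: val z :\: val y| + #|R :&: val y| <= #|R :\: val w|.
Proof.
rewrite !adjE subsetC => zw yw.
have := cardsID (val y) (R :&: (val z :|: val y)).
have -> : R :&: (val z :|: val y) :&: val y = R :&: val y by by_membership.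
have -> : R :&: (val z :|: val y) :\: val y = R :&: val z :\: val y by by_membership.
move=> card_zy; rewrite addnC card_zy; apply/subset_leq_card/subsetP => u.
by rewrite !inE => /andP[uR /orP[/(subsetP zw)|/(subsetP yw)]]; rewrite inE uR andbT.
Qed.

Lemma meet_in_le R x z y : meet_in R x z <= meet_in R x y + #|R :&: val z :\: val y|.
Proof.
apply: leq_trans (leq_card_setU _ _); apply/subset_leq_card/subsetP => u.
by rewrite !inE; case: (u \in R); case: (u \in val x); case: (u \in val z); case: (u \in val y).
Qed.

Lemma card_x0_setD x : #|x0set m :\: val x| = m - level x.
Proof. by rewrite cardsD card_x0. Qed.

Lemma card_setC_x0_setI x : #|~: x0set m :&: val x| = m - level x.
Proof. by rewrite setIC -setDE cardsD card_vertex setIC. Qed.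

Lemma card_setC_x0_setD x : #|~: x0set m :\: val x| = (level x).+1.
Proof.
have := level_le x; rewrite cardsD card_setC_x0 card_setC_x0_setI /level; lia.
Qed.

Lemma meet_in_le_l R x y : meet_in R x y <= #|R :&: val x|.
Proof. exact/subset_leq_card/subsetIl. Qed.

Lemma meet_in_le_r R x y : meet_in R x y <= #|R :&: val y|.
Proof. by apply/subset_leq_card; rewrite -setIA setICA subsetIr. Qed.

Lemma meet_in_x0_setC x y :
  meet_in (x0set m) x y + meet_in (~: x0set m) x y = #|val x :&: val y|.
Proof.
rewrite /meet_in -!setIA -(cardsID (x0set m) (val x :&: val y)) setDE.
by rewrite [_ :&: x0set m]setIC [_ :&: ~: _]setIC.
Qed.

Definition in_cone i j p q x y : Prop :=
  [/\ level x = i, level y = j,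
      p <= meet_in (x0set m) x y & q <= meet_in (~: x0set m) x y].

(* In the notation of the paper, the apex pairs are those with ∂(x0, x, y) = (i, j, p + q, p). *)
Definition at_apex i j p q x y : Prop :=
  [/\ level x = i, level y = j,
      meet_in (x0set m) x y = p & meet_in (~: x0set m) x y = q].

Definition cone_matrix i j p q (F : X m -> X m -> nat) : Prop :=
  [/\ inT (nat_mx F), forall x y, 0 < F x y -> in_cone i j p q x y
    & forall x y, at_apex i j p q x y -> 0 < F x y].

Lemma meet_in_x0_diag x : meet_in (x0set m) x x = level x.
Proof. by rewrite /meet_in -setIA setIid. Qed.

Lemma meet_in_setC_x0_diag x : meet_in (~: x0set m) x x = m - level x.
Proof. by rewrite /meet_in -setIA setIid card_setC_x0_setI. Qed.

Lemma at_apex_eq i j p q x y : p + q = m -> at_apex i j p q x y -> x = y.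
Proof. by move=> pq_m [_ _ px qy]; apply: vertex_eq; rewrite -meet_in_x0_setC px qy pq_m. Qed.

Lemma cone_matrix_base i j p q : p + q = m -> exists F, cone_matrix i j p q F.
Proof.
move=> pq_m; have [/andP[/eqP eq_ij /eqP eq_pi]|not_diag] := boolP ((i == j) && (p == i)).
  rewrite -{}eq_ij {}eq_pi in pq_m *; exists (on_level i); split.
  - exact: inT_on_level.
  - move=> x y; rewrite lt0b => /andP[/eqP <-{y} /eqP lev_x].
    by split; rewrite ?meet_in_x0_diag ?meet_in_setC_x0_diag ?lev_x //; lia.
  - move=> x y apex; have xy := at_apex_eq pq_m apex; case: apex; rewrite -{}xy.
    by move=> lev_x _ _ _; rewrite lt0b eqxx lev_x eqxx.
exists (fun _ _ => 0); split=> [||x y apex]; rewrite ?nat_mx0; try exact: inT0; first by [].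
have xy := at_apex_eq pq_m apex; case: apex not_diag; rewrite -{}xy meet_in_x0_diag.
by move=> -> <- <- _; rewrite !eqxx.
Qed.

Lemma two_step_cone i j j' p q (b : bool) F : b ==> (j < m) ->
  (forall x z, 0 < F x z -> in_cone i j' (p + b) (q + ~~ b) x z) ->
  forall x y, 0 < nat_mul F (two_step (m - (j + b)) j) x y -> in_cone i j p q x y.
Proof.
move=> b_lt F_cone x y; rewrite nat_mul_gt0 => /existsP[z /andP[/F_cone[lev_x _ pz qz]]].
rewrite two_step_gt0 => /andP[/eqP lev_y /existsP[w /and3P[zw /eqP lev_w wy]]].
have := card_two_step_region (x0set m) zw wy; have := card_two_step_region (~: x0set m) zw wy.
rewrite card_x0_setD card_setC_x0_setD card_setC_x0_setI -/(level y) lev_w lev_y.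
have := meet_in_le (x0set m) x z y; have := meet_in_le (~: x0set m) x z y.
have := level_le y; rewrite lev_y; move: b_lt pz qz.
by case: (b) => /= b_lt pz qz *; split=> //; lia.
Qed.

Lemma mem_x0_region (c : bool) u :
  u \in (if c then x0set m else ~: x0set m) -> (u \in x0set m) = c.
Proof. by case: c; rewrite ?inE // => /negbTE. Qed.

Lemma exists_swap_points n i j p q x y : n.+1 + p + q = m -> at_apex i j p q x y ->
  exists a b, [/\ a \in val y :\: val x, b \in val x :\: val y,
    (a \in x0set m) = (p < j) & (b \in x0set m) = (p < i) && (j < m)].
Proof.
move=> npq_m [lev_x lev_y px qy].
have := meet_in_le_l (x0set m) x y; have := meet_in_le_r (x0set m) x y.
have := meet_in_le_l (~: x0set m) x y; have := meet_in_le_r (~: x0set m) x y.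
have := subset_leq_card (setSD (val y) (subsetIl (x0set m) (val x))).
rewrite !card_setC_x0_setI card_x0_setD -/(level x) -/(level y) lev_x lev_y px qy.
move=> x0_xy q_le_y q_le_x p_le_y p_le_x.
have card_xy R : #|R :&: val x :\: val y| = #|R :&: val x| - meet_in R x y by exact: cardsD.
have card_yx R : #|R :&: val y :\: val x| = #|R :&: val y| - meet_in R x y.
  by rewrite cardsD /meet_in setIAC.
rewrite card_xy px -/(level x) lev_x in x0_xy.
have [a] : exists a, a \in (if p < j then x0set m else ~: x0set m) :&: val y :\: val x.
  apply/set0Pn; rewrite -card_gt0 card_yx; case: ifP => [pj|/negbT].
    by rewrite px -/(level y) lev_y; lia.
  by rewrite qy card_setC_x0_setI lev_y; lia.
rewrite [in X in X -> _]setDE -setIA -setDE => /setIP[/mem_x0_region a_x0 a_yx].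
have [b] : exists b, b \in (if (p < i) && (j < m) then x0set m else ~: x0set m) :&: val x :\: val y.
  apply/set0Pn; rewrite -card_gt0 card_xy; case: ifP => [/andP[pi jm]|/negbT].
    by rewrite px -/(level x) lev_x; lia.
  by rewrite qy card_setC_x0_setI lev_x negb_and -!leqNgt; case/orP; lia.
rewrite [in X in X -> _]setDE -setIA -setDE => /setIP[/mem_x0_region b_x0 b_xy].
by exists a, b.
Qed.

(* One step moves y towards x: a point of y \ x is exchanged for a point of x \ y, each
   taken inside x0 whenever possible, and [a], [b] record whether they are. *)
Lemma two_step_apex n i j p q F : n.+1 + p + q = m ->
  let a := p < j in let b := (p < i) && (j < m) in
  (forall x z, at_apex i (j + b - a) (p + b) (q + ~~ b) x z -> 0 < F x z) ->
  forall x y, at_apex i j p q x y -> 0 < nat_mul F (two_step (m - (j + b)) j) x y.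
Proof.
move=> npq_m a b F_apex x y apex.
have [a0 [b0 [/setDP[ay ax] /setDP[bx by_] a_x0 b_x0]]] := exists_swap_points npq_m apex.
case: apex => lev_x lev_y px qy.
have [z [w [zw wy lev_w lev_z meet_z]]] := exists_swap_step ay ax bx by_.
rewrite nat_mul_gt0; apply/existsP; exists z; rewrite F_apex.
  rewrite two_step_gt0 lev_y eqxx /=; apply/existsP; exists w; rewrite zw wy andbT /=.
  by apply/eqP; move: lev_w; rewrite lev_y b_x0; lia.
split=> //; first by move: lev_z; rewrite lev_y a_x0 b_x0; lia.
  by rewrite meet_z px b_x0.
by rewrite meet_z qy inE b_x0.
Qed.

Lemma exists_cone_matrix n i j p q : n + p + q = m -> exists F, cone_matrix i j p q F.
Proof.
elim: n i j p q => [|n IH] i j p q npq_m; first exact: cone_matrix_base.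
pose a := p < j; pose b := (p < i) && (j < m).
have [|F [TF F_cone F_apex]] := IH i (j + b - a) (p + b) (q + ~~ b).
  by move: npq_m; case: (b) => /=; lia.
exists (nat_mul F (two_step (m - (j + b)) j)); split.
- exact: inT_nat_mul TF (inT_two_step _ _).
- by apply: two_step_cone F_cone; apply/implyP => /andP[].
- exact: two_step_apex npq_m F_apex.
Qed.

End Cones.

Lemma imset_perm_setI (T : finType) (s : {perm T}) (A B : {set T}) :
  s @: (A :&: B) = s @: A :&: s @: B.
Proof. by apply: imsetI => u v _ _; apply: perm_inj. Qed.

Lemma imset_perm_eq (T : finType) (s : {perm T}) (A A' : {set T}) :
  (forall u, (s u \in A') = (u \in A)) -> s @: A = A'.
Proof.
move=> sA; apply/setP => t; apply/imsetP/idP => [[u uA ->]|tA]; first by rewrite sA.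
by exists ((s^-1)%g t); rewrite -?sA ?permKV.
Qed.

Section Stabilizer.

Variable m : nat.
Implicit Types (x y : X m) (s : {perm Sset m}).

Lemma card_perm_vertex s x : #|s @: val x| = m.
Proof. by rewrite card_imset ?card_vertex //; apply: perm_inj. Qed.

Lemma perm_vertex_inj s : injective (fun x => vertex (card_perm_vertex s x)).
Proof.
move=> x y /(congr1 val) /= sxy; apply/val_inj/(imset_inj (@perm_inj _ s)) => //.
Qed.

Definition perm_vertex s : {perm X m} := perm (@perm_vertex_inj s).

Lemma perm_vertexE s x : val (perm_vertex s x) = s @: val x.
Proof. by rewrite permE. Qed.

Lemma perm_vertex_aut s : is_aut (perm_vertex s).
Proof.
apply/forallP => x; apply/forallP => y; apply/eqP.
by rewrite /adj !perm_vertexE -!setI_eq0 -imset_perm_setI imset_eq0.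
Qed.

Lemma dtriple_perm_vertex s x y z :
  dtriple (perm_vertex s x) (perm_vertex s y) (perm_vertex s z) = dtriple x y z.
Proof.
by rewrite /dtriple !perm_vertexE -!imset_perm_setI !card_imset //; apply: perm_inj.
Qed.

Lemma stab_transitive x y x' y' : dtriple (x0 m) x y = dtriple (x0 m) x' y' ->
  exists2 t : {perm X m}, in_stab t & t x = x' /\ t y = y'.
Proof.
case=> e1 e2 e3 e4.
have [s sP] := venn3_perm (erefl #|x0set m|) (etrans (card_vertex x) (esym (card_vertex x')))
  (etrans (card_vertex y) (esym (card_vertex y'))) e1 e2 e3 e4.
have sx0 : s @: x0set m = x0set m by apply: imset_perm_eq => u; case: (sP u).
exists (perm_vertex s); first by rewrite /in_stab perm_vertex_aut; apply/eqP/val_inj; rewrite perm_vertexE.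
by split; apply/val_inj; rewrite perm_vertexE; apply: imset_perm_eq => u; case: (sP u).
Qed.

Lemma dtriple_x0_realized (a b c : X m) : exists x y, dtriple (x0 m) x y = dtriple a b c.
Proof.
have card_a : #|val a| = #|x0set m| by rewrite card_vertex card_x0.
have card_aa : #|val a :&: val a| = #|x0set m :&: x0set m| by rewrite !setIid.
have card_aaa : #|val a :&: val a :&: val a| = #|x0set m :&: x0set m :&: x0set m|.
  by rewrite !setIid.
have [s sP] := venn3_perm card_a card_a card_a card_aa card_aa card_aa card_aaa.
exists (perm_vertex s b), (perm_vertex s c); rewrite -(dtriple_perm_vertex s a b c).
congr dtriple; apply/val_inj; rewrite perm_vertexE /=.
by apply/esym/imset_perm_eq => u; case: (sP u).
Qed.

Lemma walk_aut (t : {perm X m}) k x y : is_aut t -> walk k (t x) (t y) = walk k x y.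
Proof.
move=> /forallP t_aut; elim: k x => [|k IH] x /=; first by rewrite (inj_eq perm_inj).
have adj_t u v : adj (t u) (t v) = adj u v by move/forallP: (t_aut u) => /(_ v) /eqP.
apply/existsP/existsP => [[z /andP[xz zy]]|[z /andP[xz zy]]].
  by exists ((t^-1)%g z); rewrite -adj_t -IH permKV xz zy.
by exists (t z); rewrite adj_t IH xz zy.
Qed.

Lemma centralizer_of_inT (B : Mat m) : inT B -> in_centralizer B.
Proof.
elim=> {B} [|i _|B C _ TB _ TC|c B _ TB|B C _ TB _ TC] t t_stab x y.
- by rewrite !ent_mkMat; case/andP: t_stab => /forallP t_aut _; rewrite (eqP (forallP (t_aut x) y)).
- case/andP: t_stab => t_aut /eqP t_x0; rewrite !ent_mkMat /dist_is (inj_eq perm_inj) -{1 2}t_x0.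
  by rewrite walk_aut //; congr (_ && (_ && _))%:R%R; apply: eq_forallb => j; rewrite walk_aut.
- by rewrite !entD TB ?TC.
- by rewrite !entZ TB.
- rewrite !entM (reindex_inj (@perm_inj _ t)) /=.
  by apply: eq_bigr => z _; rewrite TB ?TC.
Qed.

End Stabilizer.

Section Orbits.

Variable m : nat.
Implicit Types (x y : X m) (B : Mat m) (τ σ : tup m).

Definition tup_of x y : tup m :=
  (inord (level x), inord (level y), inord #|val x :&: val y|, inord (meet_in (x0set m) x y)).

Lemma tup_nat_tup_of x y : tup_nat (tup_of x y) = dtriple (x0 m) x y.
Proof.
have meet_le : meet_in (x0set m) x y <= m.
  exact: leq_trans (meet_in_le_l _ x y) (level_le x).
by rewrite /tup_nat /dtriple /= !inordK // ltnS ?level_le ?card_meet_le.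
Qed.

Lemma tup_nat_inj : injective (@tup_nat m).
Proof.
by move=> [[[a b] c] d] [[[a' b'] c'] d'] [/val_inj-> /val_inj-> /val_inj-> /val_inj->].
Qed.

Lemma tup_of_card_meet x y : (tup_of x y).1.2 = #|val x :&: val y| :> nat.
Proof. by rewrite /= inordK // ltnS card_meet_le. Qed.

Lemma at_apex_tup_of i j p q x y x' y' :
  at_apex i j p q x y -> at_apex i j p q x' y' -> tup_of x y = tup_of x' y'.
Proof.
case=> lev_x lev_y px qy [lev_x' lev_y' px' qy'].
by rewrite /tup_of -!meet_in_x0_setC lev_x lev_y px qy lev_x' lev_y' px' qy'.
Qed.

Lemma in_cone_apex i j p q x y : in_cone i j p q x y ->
  p + q < #|val x :&: val y| \/ at_apex i j p q x y.
Proof.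
case=> lev_x lev_y px qy; rewrite -meet_in_x0_setC.
have [lt|eq] := ltnP (p + q) (meet_in (x0set m) x y + meet_in (~: x0set m) x y); first by left.
by right; split=> //; lia.
Qed.

Local Open Scope ring_scope.

Lemma ent_Mtp τ x y : ent (Mtp τ) x y = (tup_of x y == τ)%:R.
Proof.
rewrite ent_mkMat -tup_nat_tup_of; congr (nat_of_bool _)%:R.
by apply/eqP/eqP => [/tup_nat_inj|->].
Qed.

Lemma inI_tup_of τ : inI τ = [exists x, exists y, tup_of x y == τ].
Proof.
apply/existsP/existsP => [[a /existsP[b /existsP[c /eqP abc]]]|[x /existsP[y /eqP xy]]].
  have [x [y xy]] := dtriple_x0_realized a b c.
  by exists x; apply/existsP; exists y; apply/eqP/tup_nat_inj; rewrite tup_nat_tup_of xy.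
by exists (x0 m); apply/existsP; exists x; apply/existsP; exists y; rewrite -tup_nat_tup_of xy.
Qed.

Lemma ent_sum_Mtp (c : tup m -> Cplx) x y :
  ent (\sum_τ c τ *: Mtp τ) x y = c (tup_of x y).
Proof.
rewrite ent_sum (bigD1 (tup_of x y)) //= big1 => [|σ σ_ne]; rewrite entZ ent_Mtp.
  by rewrite eqxx mulr1 addr0.
by rewrite eq_sym (negbTE σ_ne) mulr0.
Qed.

Lemma sum_Mtp_inI (c : tup m -> Cplx) :
  \sum_(τ | inI τ) c τ *: Mtp τ = \sum_τ c τ *: Mtp τ.
Proof.
rewrite big_mkcond; apply: eq_bigr => τ _; case: ifP => // not_inI.
suff -> : Mtp τ = 0 by rewrite scaler0.
apply: ent_inj => x y; rewrite ent_Mtp /ent mxE; case: eqP => // xyτ.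
by move: not_inI; rewrite inI_tup_of; case/existsP; exists x; apply/existsP; exists y; rewrite xyτ.
Qed.

Definition coef B τ : Cplx :=
  if [pick xy : X m * X m | tup_of xy.1 xy.2 == τ] is Some xy then ent B xy.1 xy.2 else 0.

Lemma coef_tup_of B x y : in_centralizer B -> coef B (tup_of x y) = ent B x y.
Proof.
move=> B_inv; rewrite /coef; case: pickP => [[x' y'] /eqP /= xy'|/(_ (x, y))]; last by rewrite eqxx.
have /stab_transitive[t t_stab [<- <-]] : dtriple (x0 m) x' y' = dtriple (x0 m) x y.
  by rewrite -!tup_nat_tup_of xy'.
by rewrite B_inv.
Qed.

Lemma centralizer_decomp B : in_centralizer B -> B = \sum_τ coef B τ *: Mtp τ.
Proof. by move=> B_inv; apply: ent_inj => x y; rewrite ent_sum_Mtp coef_tup_of. Qed.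

Lemma coef_neq0 B τ : coef B τ != 0 -> exists x y, tup_of x y = τ /\ ent B x y != 0.
Proof.
rewrite /coef; case: pickP => [[x y] /eqP /= xy nz|_]; last by rewrite eqxx.
by exists x, y.
Qed.

Lemma inT_Mtp_pivot B τ : inT B -> coef B τ != 0 ->
  (forall σ, σ != τ -> coef B σ != 0 -> inT (Mtp σ)) -> inT (Mtp τ).
Proof.
move=> TB nz T_others.
have T_rest : inT (\sum_(σ | σ != τ) coef B σ *: Mtp σ).
  apply: inT_sum => σ ne; have [->|nzσ] := eqVneq (coef B σ) 0.
    by rewrite scale0r; exact: inT0.
  exact/inT_scale/T_others.
suff -> : Mtp τ = (coef B τ)^-1 *: (B - \sum_(σ | σ != τ) coef B σ *: Mtp σ).
  exact/inT_scale/inT_sub.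
by rewrite {2}(centralizer_decomp (centralizer_of_inT TB)) (bigD1 τ) //= addrK scalerA mulVf ?scale1r.
Qed.

Lemma inT_Mtp τ : inT (Mtp τ).
Proof.
move: {2}(m - τ.1.2).+1%N (ltnSn (m - τ.1.2)) => k; elim: k τ => // k IH τ lt_k.
case: (pickP (fun xy : X m * X m => tup_of xy.1 xy.2 == τ)) => [[xs ys] /eqP /= τE|none].
  subst τ; pose p := meet_in (x0set m) xs ys; pose q := meet_in (~: x0set m) xs ys.
  have apex_s : at_apex (level xs) (level ys) p q xs ys by [].
  have [|F [TF F_cone F_apex]] :=
      @exists_cone_matrix m (m - #|val xs :&: val ys|) (level xs) (level ys) p q.
    by rewrite -addnA meet_in_x0_setC subnK // card_meet_le.
  apply: (inT_Mtp_pivot TF).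
    rewrite coef_tup_of; last exact: centralizer_of_inT.
    by rewrite ent_nat_mx pnatr_eq0 -lt0n F_apex.
  move=> σ ne /coef_neq0[x [y [xyσ nz]]]; rewrite -{}xyσ in ne *; apply: IH.
  rewrite ent_nat_mx pnatr_eq0 -lt0n in nz.
  have [lt|apex] := in_cone_apex (F_cone x y nz); last first.
    by rewrite (at_apex_tup_of apex apex_s) eqxx in ne.
  move: lt_k; rewrite !tup_of_card_meet -meet_in_x0_setC; have := card_meet_le x y; lia.
suff -> : Mtp τ = 0 by exact: inT0.
by apply: ent_inj => x y; rewrite ent_Mtp /ent mxE; have := none (x, y); rewrite /= => ->.
Qed.

End Orbits.

Local Open Scope ring_scope.

Theorem theorem3p8 (m : nat) (hm : (0 < m)%N) :
  (forall B : Mat m, inT B <-> inA B) /\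
  (forall c : tup m -> Cplx,
     \sum_(τ : tup m | inI τ) c τ *: Mtp τ = 0 ->
     forall τ : tup m, inI τ -> c τ = 0) /\
  (forall B : Mat m, inT B <-> in_centralizer B).
Proof.
have inT_of_inA B : inA B -> inT B.
  by case=> c ->; apply: inT_sum => τ _; apply/inT_scale/inT_Mtp.
have inA_of_centralizer B : in_centralizer B -> inA B.
  by move=> B_inv; exists (coef B); rewrite sum_Mtp_inI -centralizer_decomp.
split; [|split].
- by move=> B; split=> [/centralizer_of_inT/inA_of_centralizer|/inT_of_inA].
- move=> c sum0 τ; rewrite inI_tup_of => /existsP[x /existsP[y /eqP <-]].
  by rewrite -(ent_sum_Mtp c x y) -sum_Mtp_inI sum0 /ent mxE.
- by move=> B; split=> [/centralizer_of_inT|/inA_of_centralizer/inT_of_inA].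
Qed.
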